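(* Let $\mathcal{T}$ be a finite tree, $w:V(\mathcal{T})\to\mathbb{R}_{\ge0}$, and $m=w(\mathcal{T})$. Then (i) for every $\alpha\in(0,1)$: $\displaystyle \mathtt{cent}^\alpha(\mathcal{T},w)\le\frac{1}{1-\alpha}\mathtt{OPT}(\mathcal{T},w)-\frac{\alpha}{1-\alpha}m$; (ii) for every $\alpha\in[\tfrac13,\tfrac12]$: $\displaystyle \mathtt{cent}^\alpha(\mathcal{T},w)\le\frac{1}{2-3\alpha}\mathtt{OPT}(\mathcal{T},w)-\frac{3\alpha-1}{2-3\alpha}m$.
   Context: For a subgraph $\mathcal{H}$ of $\mathcal{T}$, $w(\mathcal{H})=\sum_{x\in V(\mathcal{H})}w(x)$. A search tree on a tree $\mathcal{T}$ is a rooted tree $T$ with vertex set $V(\mathcal{T})$ defined recursively: its root is an arbitrary vertex $r$, and the children of $r$ are the roots of search trees built on the connected components of $\mathcal{T}-r$; a single-vertex tree has only itself as search tree. $\mathtt{cost}_w(T)=\sum_x w(x)\,\mathtt{depth}_T(x)$ with root depth $1$; $\mathtt{OPT}(\mathcal{T},w)$ is the minimum cost over all search trees on $\mathcal{T}$. For $0\le\alpha\le1$, a vertex $v$ is an $\alpha$-centroid of $(\mathcal{T},w)$ if every component $\mathcal{H}$ of $\mathcal{T}-v$ has $w(\mathcal{H})\le\alpha\, w(\mathcal{T})$. A search tree $T$ is an $\alpha$-centroid tree if every vertex $x$ is an $\alpha$-centroid of $(\mathcal{T}[V(T_x)],w)$, where $T_x$ is the subtree of $T$ rooted at $x$. $\mathtt{cent}^\alpha(\mathcal{T},w)$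 is the maximum cost of an $\alpha$-centroid tree of $(\mathcal{T},w)$, or $0$ if none exists. *)

From HB Require Import structures.
From mathcomp Require Import all_boot all_order all_algebra.
From mathcomp Require Import boolp reals.
Set Implicit Arguments. Unset Strict Implicit. Unset Printing Implicit Defensive.
Import Order.TTheory GRing.Theory Num.Theory.
Local Open Scope ring_scope.

Definition has_cycle (V : finType) (e : rel V) : Prop :=
  exists (x : V) (p : seq V),
    [/\ 2 <= size p, uniq (x :: p), path e x p & e (last x p) x]%N.

Definition is_tree (V : finType) (e : rel V) : Prop :=
  [/\ (0 < #|V|)%N, symmetric e, irreflexive e,
      (forall x y : V, connect e x y) & ~ has_cycle e].

Definition restr (V : finType) (e : rel V) (S : {set V}) : rel V :=
  [rel x y | [&& x \in S, y \in S & e x y]].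

Definition comp (V : finType) (e : rel V) (S : {set V}) (x : V) : {set V} :=
  [set y in S | connect (restr e S) x y].

Definition is_component (V : finType) (e : rel V) (S C : {set V}) : Prop :=
  exists2 x, x \in S & C = comp e S x.

Definition wset (V : finType) (R : realType) (w : V -> R) (S : {set V}) : R :=
  \sum_(x in S) w x.

Inductive stree (V : Type) := Node of V & seq (stree V).

Fixpoint vset (V : finType) (t : stree V) : {set V} :=
  match t with
  | Node r ts =>
      r |: (fix vs (ts : seq (stree V)) : {set V} :=
              match ts with [::] => finset.set0 | c :: ts' => vset c :|: vs ts' end) ts
  end.

Fixpoint is_stree (V : finType) (e : rel V) (S : {set V}) (t : stree V) : Prop :=
  match t with
  | Node r ts =>
      [/\ r \in S,
          uniq [seq vset c | c <- ts],
          (forall C, C \in [seq vset c | c <- ts] <-> is_component e (S :\ r) C)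
        & (fix all_st (ts : seq (stree V)) : Prop :=
             match ts with
             | [::] => True
             | c :: ts' => is_stree e (vset c) c /\ all_st ts'
             end) ts]
  end.

Definition search_tree (V : finType) (e : rel V) (t : stree V) : Prop :=
  is_stree e [set: V] t.

Fixpoint cost_at (V : finType) (R : realType) (w : V -> R) (d : nat) (t : stree V) : R :=
  match t with
  | Node r ts =>
      w r * d%:R +
      (fix cs (ts : seq (stree V)) : R :=
         match ts with [::] => 0 | c :: ts' => cost_at w d.+1 c + cs ts' end) ts
  end.

Definition cost (V : finType) (R : realType) (w : V -> R) (t : stree V) : R :=
  cost_at w 1 t.

(* OPT(T,w): minimum cost of a search tree (as an infimum over the finitely
   many search trees). *)
Definition OPT (V : finType) (e : rel V) (R : realType) (w : V -> R) : R :=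
  inf (fun c : R => exists t, search_tree e t /\ c = cost w t).

Definition is_centroid (V : finType) (e : rel V) (R : realType) (w : V -> R)
    (alpha : R) (S : {set V}) (v : V) : Prop :=
  forall C, is_component e (S :\ v) C -> wset w C <= alpha * wset w S.

Fixpoint is_cent_tree (V : finType) (e : rel V) (R : realType) (w : V -> R)
    (alpha : R) (t : stree V) : Prop :=
  match t with
  | Node r ts =>
      is_centroid e w alpha (vset t) r /\
      (fix all_c (ts : seq (stree V)) : Prop :=
         match ts with
         | [::] => True
         | c :: ts' => is_cent_tree e w alpha c /\ all_c ts'
         end) ts
  end.

Definition cent (V : finType) (e : rel V) (R : realType) (w : V -> R) (alpha : R) : R :=
  let P := fun c : R => exists t, [/\ search_tree e t, is_cent_tree e w alpha t & c = cost w t] in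
  if `[< exists c, P c >] then sup P else 0.

From Pilot Require Import Defs.
From HB Require Import structures.
From mathcomp Require Import all_boot all_order all_algebra.
From mathcomp Require Import boolp reals.
From mathcomp Require Import ring lra.
Import Order.TTheory GRing.Theory Num.Theory.
Local Open Scope ring_scope.
Set Implicit Arguments. Unset Strict Implicit. Unset Printing Implicit Defensive.

(* Charge every node [v] of a search tree [T] with [w(T_v)]: the cost of [T] is
   the sum of the charges, and [sum_(v in A) w(A :&: T_v)] is the cost of the
   search tree that [T] induces on a connected set [A].  Compare an
   alpha-centroid tree [C] with an arbitrary search tree [T] along [C]: at a node
   [r] of [C] with vertex set [A], whose children span the components [K] of
   [A - r], each of weight at most [alpha w(A)], the cost [T] induces on [A]
   exceeds the sum of the costs it induces on the [K] by at least
   [min(w(A), (1 - alpha) w(A) + w(r))], and also by at least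
   [min(w(A), 2 (1 - alpha) w(A), (2 - 3 alpha) w(A) + w(r))].  Summing these
   gains over the nodes of [C] gives [p cost(C) + q m <= cost(T)] for
   [(p, q) = (1 - alpha, alpha)] and [(2 - 3 alpha, 3 alpha - 1)]. *)

Section SearchTreeUnfolding.

Variable V : finType.
Implicit Types (r : V) (S : {set V}) (t c : stree V) (ts : seq (stree V)).

(* The generated induction principle of the nested type [stree] carries no
   hypothesis on the children. *)
Definition stree_ind_In (P : stree V -> Prop)
    (IH : forall r ts, (forall c, List.In c ts -> P c) -> P (Node r ts)) :
  forall t, P t :=
  fix F t := match t with
  | Node r ts => IH r ts ((fix G ts : forall c, List.In c ts -> P c :=
       match ts with
       | [::] => fun c f => False_ind _ f
       | c0 :: ts' => fun c h => match h with
                                 | or_introl E => eq_ind c0 P (F c0) c E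
                                 | or_intror h' => G ts' c h' end
       end) ts)
  end.

Lemma vset_Node r ts : vset (Node r ts) = r |: \bigcup_(c <- ts) vset c.
Proof. by congr (_ |: _); elim: ts => [|c ts /= ->]; rewrite ?big_nil ?big_cons. Qed.

Lemma root_in_vset r ts : r \in vset (Node r ts).
Proof. by rewrite vset_Node setU11. Qed.

Lemma vset_child_sub r ts c : List.In c ts -> vset c \subset vset (Node r ts).
Proof.
rewrite vset_Node => cts; apply/subsetP => x xc; apply/setU1P; right.
elim: ts cts => //= c' ts IH [->|/IH cts]; by rewrite big_cons inE ?xc ?cts ?orbT.
Qed.

Lemma is_stree_Node (e : rel V) S r ts :
  is_stree e S (Node r ts) <->
  [/\ r \in S, uniq [seq vset c | c <- ts],
      (forall C, C \in [seq vset c | c <- ts] <-> is_component e (S :\ r) C)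
    & forall c, List.In c ts -> is_stree e (vset c) c].
Proof.
have all_In ts' : (fix all_st ts : Prop := match ts with
    | [::] => True | c :: ts => is_stree e (vset c) c /\ all_st ts end) ts'
  <-> (forall c, List.In c ts' -> is_stree e (vset c) c).
  elim: ts' => [|c ts' IH] /=; first by split.
  rewrite IH; split=> [[? H] c' [<-|/H]|H] //.
  by split=> [|c' ?]; apply: H; [left|right].
by split=> -[? ? ? /all_In ?].
Qed.

Variables (R : realType) (w : V -> R).

Lemma is_cent_tree_Node (e : rel V) alpha r ts :
  is_cent_tree e w alpha (Node r ts) <->
  is_centroid e w alpha (vset (Node r ts)) r /\
  forall c, List.In c ts -> is_cent_tree e w alpha c.
Proof.
have all_In ts' : (fix all_c ts : Prop := match ts with
    | [::] => True | c :: ts => is_cent_tree e w alpha c /\ all_c ts end) ts'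
  <-> (forall c, List.In c ts' -> is_cent_tree e w alpha c).
  elim: ts' => [|c ts' IH] /=; first by split.
  rewrite IH; split=> [[? H] c' [<-|/H]|H] //.
  by split=> [|c' ?]; apply: H; [left|right].
by split=> -[? /all_In ?].
Qed.

Lemma cost_at_Node d r ts :
  cost_at w d (Node r ts) = w r * d%:R + \sum_(c <- ts) cost_at w d.+1 c.
Proof. by congr (_ + _); elim: ts => [|c ts /= ->]; rewrite ?big_nil ?big_cons. Qed.

End SearchTreeUnfolding.

Section SumsOverIn.

Variables (T : Type) (R : numDomainType).
Implicit Types (s : seq T) (F G : T -> R).

Lemma eq_big_In s F G :
  (forall c, List.In c s -> F c = G c) -> \sum_(c <- s) F c = \sum_(c <- s) G c.
Proof.
elim: s => [|c s IH] H; rewrite ?big_nil ?big_cons // H; last by left.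
by rewrite IH // => c' H'; apply: H; right.
Qed.

Lemma ler_sum_In s F G :
  (forall c, List.In c s -> F c <= G c) -> \sum_(c <- s) F c <= \sum_(c <- s) G c.
Proof.
elim: s => [|c s IH] H; rewrite ?big_nil ?big_cons // lerD //; first by apply: H; left.
by apply: IH => c' H'; apply: H; right.
Qed.

Lemma sumr_ge0_In s F :
  (forall c, List.In c s -> 0 <= F c) -> 0 <= \sum_(c <- s) F c.
Proof.
elim: s => [|c s IH] H; rewrite ?big_nil ?big_cons // addr_ge0 //; first by apply: H; left.
by apply: IH => c' H'; apply: H; right.
Qed.

Lemma ler_sum_In_term s F c0 :
  (forall c, List.In c s -> 0 <= F c) -> List.In c0 s -> F c0 <= \sum_(c <- s) F c.
Proof.
elim: s => [|c s IH] H //= [<-|I]; rewrite big_cons.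
  by rewrite lerDl; apply: sumr_ge0_In => c' H'; apply: H; right.
apply: (le_trans (IH _ I)); first by move=> c' H'; apply: H; right.
by rewrite lerDr; apply: H; left.
Qed.

End SumsOverIn.

Lemma In_map (T : Type) (U : eqType) (f : T -> U) (s : seq T) c :
  List.In c s -> f c \in map f s.
Proof. by elim: s => //= c' s IH [->|/IH H]; rewrite inE ?eqxx ?H ?orbT. Qed.

Lemma mem_map_In (T : Type) (U : eqType) (f : T -> U) (s : seq T) y :
  y \in map f s -> exists2 c, List.In c s & f c = y.
Proof.
elim: s => //= c s IH; rewrite inE => /orP[/eqP ->|/IH [c' H <-]].
  by exists c; [left|].
by exists c'; [right|].
Qed.

Lemma mem_In (T : eqType) (s : seq T) x : x \in s -> List.In x s.
Proof. by elim: s => //= y s IH; rewrite inE => /orP[/eqP ->|/IH]; [left|right]. Qed.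

Section Components.

Variables (V : finType) (e : rel V).
Implicit Types (X Y C K : {set V}) (x y z : V) (p : seq V).

Lemma connect_restrS X Y x y :
  X \subset Y -> connect (restr e X) x y -> connect (restr e Y) x y.
Proof.
move=> sXY; apply: connect_sub => u v /and3P[uX vX euv].
by apply: connect1; rewrite /restr /= (subsetP sXY _ uX) (subsetP sXY _ vX).
Qed.

Lemma path_restr_mem X x p : path (restr e X) x p -> all [in X] p.
Proof. by elim: p x => //= y p IH x /andP[/and3P[_ -> _] /IH]. Qed.

Lemma path_restr_to X Y x p :
  path (restr e X) x p -> x \in Y -> all [in Y] p -> path (restr e Y) x p.
Proof.
elim: p x => //= y p IH x /andP[/and3P[_ _ exy] pp] xY /andP[yY aY].
by rewrite {1}/restr /= xY yY exy /= IH.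
Qed.

Lemma mem_comp X x : x \in X -> x \in Defs.comp e X x.
Proof. by move=> xX; rewrite inE xX connect0. Qed.

Lemma comp_sub X x : Defs.comp e X x \subset X.
Proof. by apply/subsetP => y; rewrite inE => /andP[]. Qed.

Lemma connect_comp X x y :
  x \in X -> connect (restr e X) x y -> connect (restr e (Defs.comp e X x)) x y.
Proof.
move=> xX /connectP[p pp ->]; apply/connectP; exists p => //.
set D := Defs.comp e X x; have : x \in D by exact: mem_comp.
elim: p {1 2 3}x pp => //= z p IH u /andP[/and3P[uX zX euz] pp] uD.
have zD : z \in D.
  move: uD; rewrite !inE zX => /andP[_ cu]; apply: connect_trans cu _.
  by apply: connect1; rewrite /restr /= uX zX.
by rewrite {1}/restr /= uD zD euz /= IH.
Qed.

Definition components X : {set {set V}} :=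
  equivalence_partition (connect (restr e X)) X.

Lemma is_componentP X C : is_component e X C <-> C \in components X.
Proof.
split; first by case=> x xX ->; apply/imsetP; exists x.
by case/imsetP=> x xX ->; exists x.
Qed.

Hypothesis e_sym : symmetric e.

Lemma connect_restr_sym X x y : connect (restr e X) x y = connect (restr e X) y x.
Proof. by apply: sym_connect_sym => u v; rewrite /restr /= e_sym andbCA. Qed.

Lemma components_partition X : partition (components X) X.
Proof.
apply: equivalence_partitionP => x y z _ _ _; split; first exact: connect0.
move=> cxy; apply/idP/idP => [cxz|]; last exact: connect_trans.
by apply: connect_trans cxz; rewrite connect_restr_sym.
Qed.

Lemma comp_eq X x y : y \in Defs.comp e X x -> Defs.comp e X y = Defs.comp e X x.
Proof.
rewrite inE => /andP[yX cxy]; apply/setP => z; rewrite !inE.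
case: (z \in X) => //=; apply/idP/idP => [|cxz]; first exact: connect_trans.
by apply: connect_trans cxz; rewrite connect_restr_sym.
Qed.

Lemma connect_in_component X C x y :
  is_component e X C -> x \in C -> y \in C -> connect (restr e C) x y.
Proof.
move=> [z zX ->]; rewrite !inE => /andP[_ czx] /andP[_ czy].
apply: connect_trans (connect_comp zX czy).
by rewrite connect_restr_sym connect_comp.
Qed.

Definition pairwise_disjoint (F : seq {set V}) :=
  pairwise (fun K K' : {set V} => [disjoint K & K']) F.

Lemma pairwise_disjoint_components X (F : seq {set V}) :
  uniq F -> (forall C, C \in F -> is_component e X C) -> pairwise_disjoint F.
Proof.
elim: F => [|C F IH] //= /andP[CF uF] H; rewrite /pairwise_disjoint /=.
apply/andP; split; last by apply: IH => // C' C'F; apply: H; rewrite inE C'F orbT.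
apply/allP => C' C'F; apply/pred0P => z /=; apply/negbTE/negP => /andP[zC zC'].
suff eqCC' : C = C' by rewrite eqCC' C'F in CF.
have [x _ eC] := H C (mem_head _ _).
have [y _ eC'] : is_component e X C' by apply: H; rewrite inE C'F orbT.
by move: zC zC'; rewrite eC eC' => zx zy; rewrite -(comp_eq zx) -(comp_eq zy).
Qed.

End Components.

Lemma connect_uniq_path (T : finType) (r : rel T) x y :
  connect r x y -> exists p, [/\ path r x p, uniq (x :: p) & last x p = y].
Proof. by case/connectP => p pp ->; case: (shortenP pp) => p' ? ? _; exists p'. Qed.

Section CutVertices.

Variables (V : finType) (e : rel V).
Implicit Types (A S : {set V}) (r t x y : V) (p : seq V).

Lemma connect_to_cut_vertex A S r t x :
  symmetric e -> A \subset S -> x \in A -> t \in A -> t != r ->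
  x \notin Defs.comp e (S :\ t) r -> connect (restr e A) x r ->
  connect (restr e (A :\ r)) x t.
Proof.
move=> e_sym sAS xA tA tr xND /connect_uniq_path[p [pp up lp]].
have [tp|tNp] := boolP (t \in x :: p); last first.
  have xt : x != t by apply: contraNneq tNp => ->; apply: mem_head.
  have inSt y : y \in x :: p -> y \in S :\ t.
    move=> yp; rewrite !inE (subsetP sAS) ?andbT; last first.
      by move: yp; rewrite inE => /predU1P[->|/(allP (path_restr_mem pp))].
    by apply: contraNneq tNp => <-.
  case/negP: xND; rewrite inE inSt ?mem_head // connect_restr_sym // -lp.
  apply/connectP; exists p => //; apply: path_restr_to pp (inSt _ (mem_head _ _)) _.
  by apply/allP => y yp; apply: inSt; rewrite inE yp orbT.
move: tp; rewrite inE => /predU1P[->|tp]; first exact: connect0.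
case/splitPr: tp pp up lp => p1 p2; rewrite cat_path => /andP[pp1 /andP[ea _]].
rewrite -cat_cons cat_uniq => /and3P[_ rNp1 _]; rewrite last_cat /= => lp.
have rNxp1 : r \notin x :: p1.
  by apply: contra rNp1 => rp1; apply/hasP; exists r; rewrite // -lp mem_last.
apply/connectP; exists (rcons p1 t); last by rewrite last_rcons.
have inAr y : y \in rcons (x :: p1) t -> y \in A :\ r.
  rewrite mem_rcons inE => /predU1P[->|yp]; first by rewrite !inE tr tA.
  rewrite !inE; apply/andP; split; first by apply: contraNneq rNxp1 => <-.
  by move: yp; rewrite inE => /predU1P[->|/(allP (path_restr_mem pp1))].
apply: (path_restr_to (X := A)); first by rewrite rcons_path pp1.
  by apply: inAr; rewrite mem_rcons !inE eqxx orbT.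
by apply/allP => y yp; apply: inAr; rewrite rcons_cons inE yp orbT.
Qed.

Hypothesis e_tree : is_tree e.

Lemma tree_neighbours_separated t a b :
  e t a -> e t b -> a != b -> ~~ connect (restr e (~: [set t])) a b.
Proof.
case: e_tree => _ e_sym e_irr _ no_cycle eta etb nab.
apply/negP => /connect_uniq_path[p [pp up lp]]; apply: no_cycle.
have tNp : t \notin a :: p.
  rewrite inE negb_or; apply/andP; split; first by apply: contraTneq eta => ->; rewrite e_irr.
  by apply/negP => /(allP (path_restr_mem pp)); rewrite !inE eqxx.
exists t, (a :: p); split.
- by case: p {pp up tNp} lp => [/= eab|]; [rewrite eab eqxx in nab|].
- by rewrite cons_uniq tNp up.
- by rewrite /= eta (sub_path _ pp) // => u v /and3P[].
- by rewrite /= lp e_sym.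
Qed.

Lemma tree_uniq_path_avoid t x y p :
  x != t -> y != t -> connect (restr e (~: [set t])) x y ->
  path e x p -> uniq (x :: p) -> last x p = y -> t \notin p.
Proof.
have e_sym : symmetric e by case: e_tree.
move=> xt yt cxy pp up lp; apply/negP => tp.
case/splitPr: tp pp up lp => p1 [|b p2].
  by rewrite last_cat => _ _ /= ty; rewrite ty eqxx in yt.
rewrite cat_path => /andP[pp1 /and3P[eat etb pp2]].
rewrite -cat_cons cat_uniq => /and3P[_ hasp /andP[tNbp2 _]]; rewrite last_cat /= => lp.
have [tNxp1 bNxp1] : t \notin x :: p1 /\ b \notin x :: p1.
  by split; apply: contra hasp => H; apply/hasP; [exists t | exists b]; rewrite ?inE ?eqxx ?orbT.
have avoid q z : t \notin z :: q -> path e z q -> path (restr e (~: [set t])) z q.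
  move=> tNq; elim: q z tNq => //= u q IH z; rewrite !inE !negb_or => /and3P[tz tu tq].
  by case/andP => ezu pq; rewrite /restr /= !inE eq_sym tz eq_sym tu ezu IH // inE negb_or tu.
have eta : e t (last x p1) by rewrite e_sym.
have ab : last x p1 != b by apply: contraNneq bNxp1 => <-; apply: mem_last.
case/negP: (tree_neighbours_separated eta etb ab).
apply: connect_trans (connect_trans _ cxy) _.
  by rewrite connect_restr_sym //; apply/connectP; exists p1; rewrite ?avoid.
by rewrite connect_restr_sym // -lp; apply/connectP; exists p2; rewrite ?avoid.
Qed.

Lemma connect_comp_cap A S r t x :
  A \subset S -> r \in A -> r != t -> x \in A -> x \in Defs.comp e (S :\ t) r ->
  connect (restr e A) x r -> connect (restr e (A :&: Defs.comp e (S :\ t) r)) x r.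
Proof.
have e_sym : symmetric e by case: e_tree.
move=> sAS rA rt xA xD /connect_uniq_path[p [pp up lp]].
have [xt xS] : x != t /\ x \in S by move: xD; rewrite !inE => /andP[/andP[]].
have tNp : t \notin p.
  apply: (tree_uniq_path_avoid xt rt _ (sub_path _ pp) up lp) => [|u v /and3P[] //].
  move: xD; rewrite inE connect_restr_sym // => /andP[_]; apply: connect_restrS.
  by apply/subsetP => y; rewrite !inE => /andP[].
have rAt : r \in A :\ t by rewrite !inE rt.
have cAt : connect (restr e (A :\ t)) r x.
  rewrite connect_restr_sym // -lp; apply/connectP; exists p => //.
  apply: (path_restr_to pp); first by rewrite !inE xt.
  apply/allP => y yp; rewrite !inE (allP (path_restr_mem pp)) // andbT.
  by apply: contraNneq tNp => <-.
rewrite connect_restr_sym //; apply: connect_restrS (connect_comp rAt cAt).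
apply/subsetP => y; rewrite !inE => /andP[/andP[yt yA] cry].
rewrite yA yt (subsetP sAS) //=; apply: connect_restrS cry.
exact: setSD.
Qed.

End CutVertices.

Section Weights.

Variables (V : finType) (R : realType) (w : V -> R).
Hypothesis w_ge0 : forall x, 0 <= w x.
Implicit Types X Y : {set V}.

Lemma wset_ge0 X : 0 <= wset w X.
Proof. exact: sumr_ge0. Qed.

Lemma wsetD1 X x : x \in X -> wset w X = w x + wset w (X :\ x).
Proof. exact: big_setD1. Qed.

Lemma w_le_wset X x : x \in X -> w x <= wset w X.
Proof. by move=> xX; rewrite (wsetD1 xX) lerDl wset_ge0. Qed.

Lemma wsetS X Y : X \subset Y -> wset w X <= wset w Y.
Proof. by move=> sXY; rewrite /wset [leRHS](big_setID X) (setIidPr sXY) lerDl wset_ge0. Qed.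

Lemma wsetU X Y : wset w (X :|: Y) <= wset w X + wset w Y.
Proof. by rewrite /wset (big_setID X) setUK lerD2l wsetS // subDset setUC. Qed.

End Weights.

Section SearchTreeComponents.

Variables (V : finType) (e : rel V).
Hypothesis e_sym : symmetric e.
Implicit Types (S : {set V}) (r : V) (t : stree V) (ts : seq (stree V)).

Lemma big_children (T : Type) (idx : T) (op : Monoid.com_law idx) (F : {set V} -> T)
    S r ts :
  is_stree e S (Node r ts) ->
  \big[op/idx]_(c <- ts) F (vset c) = \big[op/idx]_(C in components e (S :\ r)) F C.
Proof.
case/is_stree_Node => _ u H _; rewrite -(big_map (@vset V) xpredT) big_uniq //.
by apply: eq_bigl => C; apply/idP/idP => [/H/is_componentP|/is_componentP/H].
Qed.

Lemma vset_stree S t : is_stree e S t -> vset t = S.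
Proof.
case: t => r ts Ht; have [rS _ _ _] := (is_stree_Node e S r ts).1 Ht.
rewrite vset_Node (big_children _ (fun C => C) Ht).
have /and3P[/eqP cover_eq _ _] := components_partition e_sym (S :\ r).
by rewrite -[in RHS](setD1K rS) -[in RHS]cover_eq.
Qed.

Lemma wset_children (R : realType) (w : V -> R) S r ts :
  is_stree e S (Node r ts) -> \sum_(c <- ts) wset w (vset c) = wset w (S :\ r).
Proof.
move=> Ht; rewrite (big_children _ (wset w) Ht).
have /and3P[/eqP cover_eq triv _] := components_partition e_sym (S :\ r).
by rewrite /wset -[in RHS]cover_eq big_trivIset.
Qed.

Lemma exists_stree S : S != set0 -> exists t, is_stree e S t.
Proof.
move: {2}#|S| (leqnn #|S|) => n; elim: n S => [|n IH] S cS nS.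
  by move: nS; rewrite -card_gt0; case: #|S| cS.
have [r rS] := set0Pn _ nS.
have [ts [vts sts]] : exists ts, map (@vset V) ts = enum (components e (S :\ r)) /\
    forall c, List.In c ts -> is_stree e (vset c) c.
  have : forall C, C \in enum (components e (S :\ r)) -> exists t, is_stree e C t.
    move=> C; rewrite mem_enum => CP; apply: IH; last first.
      exact: partition_neq0 (components_partition e_sym _) CP.
    have [z _ ->] := (is_componentP e _ _).2 CP.
    by rewrite -ltnS (leq_trans _ cS) // (cardsD1 r S) rS ltnS subset_leq_card ?comp_sub.
  elim: (enum _) => [|C L IHL] HL; first by exists [::].
  have [t Ht] := HL C (mem_head _ _).
  have [ts [vts sts]] := IHL (fun C' C'L => HL C' (mem_behead (s := C :: L) C'L)).
  exists (t :: ts); split; first by rewrite /= vts (vset_stree Ht).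
  by move=> c [<-|/sts]; rewrite ?(vset_stree Ht).
exists (Node r ts); apply/is_stree_Node; split => //; first by rewrite vts enum_uniq.
by move=> C; rewrite vts mem_enum is_componentP.
Qed.

End SearchTreeComponents.

Lemma sum_disjoint_mem_le (V : finType) (R : numDomainType) (F : seq {set V})
    (f : {set V} -> R) x b :
  pairwise_disjoint F -> (forall K, K \in F -> 0 <= f K <= b) -> 0 <= b ->
  \sum_(K <- F) (if x \in K then f K else 0) <= b.
Proof.
elim: F => [|K F IH]; rewrite ?big_nil ?big_cons // /pairwise_disjoint pairwise_cons.
move=> /andP[dK pF] Hf b0; case xK: (x \in K).
  rewrite big1_seq ?addr0; first by case/andP: (Hf K (mem_head _ _)).
  move=> K' /andP[_ K'F]; move/allP: dK => /(_ K' K'F) dKK'.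
  by rewrite (disjointFr dKK' xK).
by rewrite add0r; apply: IH => // K' K'F; apply: Hf; rewrite inE K'F orbT.
Qed.

Section InducedCost.

Variables (V : finType) (R : realType) (w : V -> R).
Hypothesis w_ge0 : forall x, 0 <= w x.
Implicit Types (A K S : {set V}) (F : seq {set V}) (t c : stree V) (ts : seq (stree V)).

(* [induced_cost A t] charges every node [v] of [t] lying in [A] with
   [w (A :&: V(t_v))]: for [A = V(t)] this is the cost of [t], and for a
   connected [A] it is the cost of the search tree that [t] induces on [A]. *)
Fixpoint induced_cost A t : R :=
  match t with
  | Node r ts => (if r \in A then wset w (A :&: vset t) else 0) +
      (fix sum ts : R := match ts with
         | [::] => 0 | c :: ts => induced_cost A c + sum ts end) ts
  end.

Lemma induced_cost_Node A r ts :
  induced_cost A (Node r ts) =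
  (if r \in A then wset w (A :&: vset (Node r ts)) else 0) + \sum_(c <- ts) induced_cost A c.
Proof. by congr (_ + _); elim: ts => [|c ts /= ->]; rewrite ?big_nil ?big_cons. Qed.

Lemma induced_cost_ge0 A t : 0 <= induced_cost A t.
Proof.
elim/stree_ind_In: t => r ts IH; rewrite induced_cost_Node addr_ge0 ?sumr_ge0_In //.
by case: ifP => _ //; apply: wset_ge0.
Qed.

Lemma induced_costI A t : induced_cost A t = induced_cost (A :&: vset t) t.
Proof.
elim/stree_ind_In: t A => r ts IH A; rewrite !induced_cost_Node.
rewrite inE root_in_vset andbT -setIA setIid; congr (_ + _).
apply: eq_big_In => c cts; rewrite (IH c cts A) [RHS](IH c cts) -setIA.
by rewrite (setIidPr (vset_child_sub r cts)).
Qed.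

Lemma sum_induced_cost_le A F t :
  pairwise_disjoint F -> (forall K, K \in F -> K \subset A) ->
  \sum_(K <- F) induced_cost K t <= induced_cost A t.
Proof.
move=> dF sFA; elim/stree_ind_In: t => r ts IH.
rewrite induced_cost_Node; under eq_bigr => K _ do rewrite induced_cost_Node.
rewrite big_split /= exchange_big /= lerD ?ler_sum_In //.
case rA: (r \in A).
  apply: sum_disjoint_mem_le => // [K KF|]; last exact: wset_ge0.
  by rewrite (wset_ge0 w_ge0) (wsetS w_ge0) // setSI // sFA.
rewrite big1_seq // => K /andP[_ KF]; case: ifP => // rK.
by rewrite (subsetP (sFA K KF) _ rK) in rA.
Qed.

Lemma cost_at_induced_cost (e : rel V) S t d :
  symmetric e -> is_stree e S t ->
  cost_at w d t = (d%:R - 1) * wset w S + induced_cost setT t.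
Proof.
move=> e_sym; elim/stree_ind_In: t S d => r ts IH S d Ht.
have [rS _ _ sts] := (is_stree_Node e S r ts).1 Ht.
rewrite cost_at_Node induced_cost_Node inE setTI (vset_stree e_sym Ht).
rewrite (eq_big_In (G := fun c => d%:R * wset w (vset c) + induced_cost setT c)); last first.
  by move=> c cts; rewrite (IH c cts (vset c) d.+1 (sts c cts)) -addn1 natrD addrK.
by rewrite big_split /= -mulr_sumr (wset_children e_sym w Ht) (wsetD1 w rS); ring.
Qed.

Lemma cost_induced_cost (e : rel V) t :
  symmetric e -> search_tree e t -> cost w t = induced_cost setT t.
Proof. by move=> e_sym Ht; rewrite /cost (cost_at_induced_cost 1 e_sym Ht) subrr mul0r add0r. Qed.

End InducedCost.

Section ClosedBlocks.

Variables (V : finType) (e : rel V).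
Implicit Types (A K S X : {set V}) (F : seq {set V}) (r t x y : V).

Definition connected_set A :=
  forall x y, x \in A -> y \in A -> connect (restr e A) x y.

(* Every [K] in [F] is a union of components of [A - r]. *)
Definition closed_blocks A r F :=
  [/\ pairwise_disjoint F, forall K, K \in F -> K \subset A :\ r
    & forall K x y, K \in F -> x \in K -> y \in A :\ r ->
        connect (restr e (A :\ r)) x y -> y \in K].

Lemma closed_blocks_cap A r F X :
  closed_blocks A r F -> closed_blocks (A :&: X) r [seq K :&: X | K <- F].
Proof.
case=> dF sF clF; split.
- rewrite /pairwise_disjoint pairwise_map; apply: sub_pairwise dF => K K' /= d.
  exact: disjointWl (subsetIl _ _) (disjointWr (subsetIl _ _) d).
- move=> _ /mapP[K KF ->]; apply/subsetP => x; rewrite !inE => /andP[xK ->].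
  by have := subsetP (sF K KF) x xK; rewrite !inE => /andP[-> ->].
move=> _ x y /mapP[K KF ->]; rewrite !inE => /andP[xK _] /and3P[yr yA yX] cxy.
rewrite yX andbT (clF K x y) ?inE ?yr //; apply: connect_restrS cxy.
by apply: setSD; apply: subsetIl.
Qed.

Hypothesis e_sym : symmetric e.

Lemma closed_blocks_components A r F :
  uniq F -> (forall C, C \in F -> is_component e (A :\ r) C) -> closed_blocks A r F.
Proof.
move=> uF Fcomp; split; first exact: pairwise_disjoint_components Fcomp.
  by move=> K /Fcomp[z _ ->]; apply: comp_sub.
move=> K x y /Fcomp[z _ ->]; rewrite !inE => /andP[_ czx] yA cxy.
by rewrite yA (connect_trans czx cxy).
Qed.

Lemma connected_component X C : is_component e X C -> connected_set C.
Proof. move=> CX x y xC yC; exact (connect_in_component e_sym CX xC yC). Qed.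

Lemma wset_le_block_cap (R : realType) (w : V -> R) A S r t F K :
  (forall x, 0 <= w x) -> A \subset S -> connected_set A -> r \in A -> t \in A ->
  t != r -> closed_blocks A r F -> K \in F -> t \in K ->
  wset w A <= wset w K + wset w (A :&: Defs.comp e (S :\ t) r).
Proof.
move=> w_ge0 sAS Aconn rA tA tr [_ _ clF] KF tK.
apply: le_trans (wsetU w_ge0 _ _); apply: (wsetS w_ge0); apply/subsetP => x xA.
rewrite in_setU in_setI xA /=.
apply/orP; have [xD|xND] := boolP (x \in Defs.comp e (S :\ t) r); [by right|left].
have xr : x != r.
  by apply: contraNneq xND => ->; rewrite mem_comp // !inE eq_sym tr (subsetP sAS).
apply: (clF K t x KF tK); first by rewrite !inE xr xA.
by rewrite connect_restr_sym // (connect_to_cut_vertex e_sym sAS xA tA tr xND (Aconn x r xA rA)).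
Qed.

Hypothesis e_tree : is_tree e.

Lemma connected_set_cap A S r t :
  A \subset S -> connected_set A -> r \in A -> r != t ->
  connected_set (A :&: Defs.comp e (S :\ t) r).
Proof.
move=> sAS Aconn rA rt.
have to_root x : x \in A :&: Defs.comp e (S :\ t) r ->
    connect (restr e (A :&: Defs.comp e (S :\ t) r)) x r.
  by case/setIP=> xA xD; apply: connect_comp_cap => //; apply: Aconn.
move=> x y xA' yA'; apply: connect_trans (to_root x xA') _.
by rewrite connect_restr_sym // to_root.
Qed.

Lemma cap_comp_id A S r t :
  A \subset S -> connected_set A -> r \in A -> t \notin A ->
  A :&: Defs.comp e (S :\ t) r = A.
Proof.
move=> sAS Aconn rA tNA; apply/setIidPl/subsetP => x xA.
have At : A \subset S :\ t.
  by apply/subsetP => y yA; rewrite !inE (subsetP sAS) ?andbT //; apply: contraNneq tNA => <-.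
rewrite inE (subsetP At) //= connect_restr_sym //.
exact: connect_restrS At (Aconn x r xA rA).
Qed.

End ClosedBlocks.

Lemma stree_child_comp (V : finType) (e : rel V) S t ts r :
  is_stree e S (Node t ts) -> r \in S -> r != t ->
  exists2 c, List.In c ts & vset c = Defs.comp e (S :\ t) r.
Proof.
case/is_stree_Node => _ _ Hcomp _ rS rt; apply: mem_map_In; apply/Hcomp.
by exists r; rewrite // !inE rt.
Qed.

Section Deficit.

Variables (V : finType) (e : rel V) (R : realType) (w : V -> R).
Hypothesis w_ge0 : forall x, 0 <= w x.
Implicit Types (A K S : {set V}) (F : seq {set V}) (r : V) (t c : stree V).

Definition deficit A F t := induced_cost w A t - \sum_(K <- F) induced_cost w K t.

Lemma deficit_ge0 A F t :
  pairwise_disjoint F -> (forall K, K \in F -> K \subset A) -> 0 <= deficit A F t.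
Proof. by move=> dF sFA; rewrite subr_ge0 sum_induced_cost_le. Qed.

Lemma deficit_capE A F c :
  deficit A F c = deficit (A :&: vset c) [seq K :&: vset c | K <- F] c.
Proof.
rewrite /deficit big_map [in LHS]induced_costI; congr (_ - _).
by apply: eq_bigr => K _; rewrite induced_costI.
Qed.

(* The term of [deficit] contributed by the root [x] of a search tree: at most
   one block contains [x]. *)
Definition block_charge F x := \sum_(K <- F) (if x \in K then wset w K else 0).

Lemma block_charge_le F x b :
  pairwise_disjoint F -> (forall K, K \in F -> wset w K <= b) -> 0 <= b ->
  block_charge F x <= b.
Proof. by move=> dF Fb b0; apply: sum_disjoint_mem_le => // K KF; rewrite wset_ge0 // Fb. Qed.

Lemma block_charge_ge F x K : K \in F -> x \in K -> wset w K <= block_charge F x.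
Proof.
move=> KF xK; have := ler_sum_In_term (F := fun K => if x \in K then wset w K else 0) _ (mem_In KF).
by rewrite xK; apply=> K' _; case: ifP => // _; apply: wset_ge0.
Qed.

Lemma block_charge_eq0 F x : (forall K, K \in F -> x \notin K) -> block_charge F x = 0.
Proof. by move=> xNF; rewrite /block_charge big1_seq // => K /andP[_ /xNF /negbTE ->]. Qed.

Lemma deficit_Node S A F r ts :
  symmetric e -> is_stree e S (Node r ts) -> A \subset S ->
  (forall K, K \in F -> K \subset A) ->
  deficit A F (Node r ts) =
  (if r \in A then wset w A else 0) - block_charge F r + \sum_(c <- ts) deficit A F c.
Proof.
move=> e_sym Ht sAS sFA; have vS := vset_stree e_sym Ht.
rewrite /deficit induced_cost_Node vS (setIidPl sAS) (eq_big_seq (fun K =>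
  (if r \in K then wset w K else 0) + \sum_(c <- ts) induced_cost w K c)); last first.
  by move=> K KF; rewrite induced_cost_Node vS (setIidPl (subset_trans (sFA K KF) sAS)).
rewrite big_split /= exchange_big /= sumrB /block_charge; ring.
Qed.

End Deficit.

Section DeficitBounds.

Variables (V : finType) (e : rel V) (R : realType) (w : V -> R).
Hypothesis e_tree : is_tree e.
Hypothesis w_ge0 : forall x, 0 <= w x.

Implicit Types (A K S : {set V}) (F : seq {set V}) (r : V) (t c : stree V).

Let e_sym : symmetric e. Proof. by case: e_tree. Qed.

(* Descend from the root [t] of the search tree towards [r]: if [t] is in a
   block [K], everything of [A] outside the child of [t] containing [r] lies in
   [K]; if [t] is outside [A], that child still contains all of [A]. *)
Lemma deficit_lower_bounds (be : R) S A r F t :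
  0 <= be -> is_stree e S t -> A \subset S -> connected_set e A -> r \in A ->
  closed_blocks e A r F -> (forall K, K \in F -> wset w K <= be) ->
  [/\ w r <= deficit w A F t,
      forall b, b <= wset w A -> b <= wset w A - be + w r -> b <= deficit w A F t
    & forall b, b <= 2 * wset w A - 2 * be -> b <= 2 * wset w A - 3 * be + w r ->
        b <= wset w A -> b <= deficit w A F t].
Proof.
move=> be_ge0; elim/stree_ind_In: t S A r F => t ts IH S A r F Ht sAS Aconn rA blocks wF.
have [dF sF _] := blocks.
have sFA K : K \in F -> K \subset A by move=> KF; apply: subset_trans (sF K KF) (subD1set _ _).
rewrite (deficit_Node w e_sym Ht sAS sFA).
set s := block_charge _ _ _; set rest := \sum_(c <- ts) _.
have s_be : s <= be by apply: block_charge_le.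
have s_A : s <= wset w A.
  by apply: block_charge_le (wset_ge0 w_ge0 A) => // K /sFA; apply: wsetS.
have wr_A := w_le_wset w_ge0 rA; have wr_ge0 := w_ge0 r.
have rest_ge0 : 0 <= rest by apply: sumr_ge0_In => c _; apply: deficit_ge0.
have [rt|tr] := eqVneq r t.
  subst t.
  rewrite rA /s block_charge_eq0; last first.
    by move=> K /sF /subsetP sK; rewrite (contraFN (sK r)) ?setD11.
  by split=> [|b|b]; lra.
have [cr crts vcr] := stree_child_comp Ht (subsetP sAS r rA) tr.
set D := Defs.comp e (S :\ t) r in vcr.
have cr_le : deficit w (A :&: D) [seq K :&: D | K <- F] cr <= rest.
  rewrite -vcr -deficit_capE; apply: ler_sum_In_term crts => c _.
  exact: deficit_ge0.
have cr_stree : is_stree e D cr.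
  by rewrite -vcr; case/is_stree_Node: Ht => _ _ _; apply.
have rAD : r \in A :&: D by rewrite inE rA mem_comp // !inE tr (subsetP sAS).
have wFD K : K \in [seq K :&: D | K <- F] -> wset w K <= be.
  by case/mapP=> K' K'F ->; apply: le_trans (wF K' K'F); apply: wsetS (subsetIl _ _).
have [IHa IHb IHc] := IH cr crts D (A :&: D) r _ cr_stree (subsetIr _ _)
  (connected_set_cap e_sym e_tree sAS Aconn rA tr) rAD (closed_blocks_cap D blocks) wFD.
case: ifP => [tA|/negbT tNA]; last first.
  rewrite /s block_charge_eq0; last by move=> K /sFA /subsetP sK; apply: contra tNA; apply: sK.
  rewrite (cap_comp_id e_sym sAS Aconn rA tNA) in IHa IHb IHc cr_le.
  split=> [|b h1 h2|b h1 h2 h3]; first lra.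
    by have := IHb b h1 h2; lra.
  by have := IHc b h1 h2 h3; lra.
have [/hasP[K KF tK]|/hasPn tNF] := boolP (has (fun K => t \in K) F); last first.
  by rewrite /s block_charge_eq0 //; split=> [|b|b]; lra.
have wK_s : wset w K <= s by apply: block_charge_ge.
have tr' : t != r by rewrite eq_sym.
have wA_le := wset_le_block_cap e_sym w_ge0 sAS Aconn rA tA tr' blocks KF tK.
split=> [|b h1 h2|b h1 h2 h3]; [lra | lra |].
have h4 : b - wset w A + s <= wset w (A :&: D) by lra.
have h5 : b - wset w A + s <= wset w (A :&: D) - be + w r by lra.
by have := IHb _ h4 h5; lra.
Qed.

End DeficitBounds.

Section CentroidTrees.

Variables (V : finType) (e : rel V) (R : realType) (w : V -> R).
Hypothesis e_tree : is_tree e.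
Hypothesis w_ge0 : forall x, 0 <= w x.
Implicit Types (A K : {set V}) (F : seq {set V}) (r : V) (T C : stree V).

Let e_sym : symmetric e. Proof. by case: e_tree. Qed.

Definition local_deficit_bound (alpha p q : R) T :=
  forall A r F, connected_set e A -> r \in A -> closed_blocks e A r F ->
    (forall K, K \in F -> wset w K <= alpha * wset w A) ->
    p * wset w A + q * w r <= deficit w A F T.

Lemma local_deficit_bound1 alpha T :
  0 < alpha < 1 -> search_tree e T -> local_deficit_bound alpha (1 - alpha) alpha T.
Proof.
move=> /andP[a_gt0 a_lt1] HT A r F Aconn rA blocks wF.
have wr_ge0 := w_ge0 r; have wr_A := w_le_wset w_ge0 rA.
have be_ge0 : 0 <= alpha * wset w A by rewrite mulr_ge0 ?wset_ge0 ?ltW.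
have [_ bound _] := deficit_lower_bounds e_tree w_ge0 be_ge0 HT (subsetT A) Aconn rA blocks wF.
by apply: bound; nra.
Qed.

Lemma local_deficit_bound2 alpha T :
  3^-1 <= alpha <= 2^-1 -> search_tree e T ->
  local_deficit_bound alpha (2 - 3 * alpha) (3 * alpha - 1) T.
Proof.
move=> /andP[a_ge a_le] HT A r F Aconn rA blocks wF.
have wr_ge0 := w_ge0 r; have wr_A := w_le_wset w_ge0 rA.
have wA_ge0 := wset_ge0 w_ge0 A.
have be_ge0 : 0 <= alpha * wset w A.
  by apply: mulr_ge0 => //; apply: le_trans a_ge; rewrite invr_ge0.
have [_ _ bound] := deficit_lower_bounds e_tree w_ge0 be_ge0 HT (subsetT A) Aconn rA blocks wF.
by apply: bound; nra.
Qed.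

Lemma centroid_tree_cost_le alpha p q T C A :
  local_deficit_bound alpha p q T ->
  is_stree e A C -> is_cent_tree e w alpha C -> connected_set e A ->
  p * induced_cost w setT C + q * wset w A <= induced_cost w A T.
Proof.
move=> bound; elim/stree_ind_In: C A => r cs IH A HC Hcent Aconn.
have [rA u Hcomp sts] := (is_stree_Node e A r cs).1 HC.
have [Hcen Hch] := (is_cent_tree_Node w e alpha r cs).1 Hcent.
rewrite (vset_stree e_sym HC) in Hcen.
have Fcomp K : K \in [seq vset c | c <- cs] -> is_component e (A :\ r) K by move/Hcomp.
have HD := bound A r _ Aconn rA (closed_blocks_components e_sym u Fcomp)
  (fun K KF => Hcen K (Fcomp K KF)).
have HS : \sum_(c <- cs) (p * induced_cost w setT c + q * wset w (vset c)) <=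
          \sum_(K <- [seq vset c | c <- cs]) induced_cost w K T.
  rewrite big_map; apply: ler_sum_In => c ccs; apply: IH => //; [exact: sts | exact: Hch |].
  exact: (connected_component e_sym (Fcomp _ (In_map _ ccs))).
rewrite induced_cost_Node inE setTI (vset_stree e_sym HC).
move: HS HD; rewrite big_split /= -!mulr_sumr (wset_children e_sym w HC) /deficit.
rewrite (wsetD1 w rA) !mulrDr; lra.
Qed.

Lemma OPT_ge b : (forall T, search_tree e T -> b <= cost w T) -> b <= OPT e w.
Proof.
move=> b_le; apply: lb_le_inf => [|_ [T [HT ->]]]; last exact: b_le.
have [x _] : exists x, x \in [set: V].
  by case: e_tree => /card_gt0P[x _] _ _ _ _; exists x; rewrite inE.
have [T HT] : exists T, search_tree e T.
  by apply: (exists_stree e_sym); apply/set0Pn; exists x.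
by exists (cost w T), T.
Qed.

Lemma cent_le alpha b :
  0 <= b -> (forall C, search_tree e C -> is_cent_tree e w alpha C -> cost w C <= b) ->
  cent e w alpha <= b.
Proof.
rewrite /cent => b_ge0 le_b; case: asboolP => // nonempty_cent.
by apply: ge_sup => // _ [C [HC Hcent ->]]; apply: le_b.
Qed.

Lemma cent_le_OPT (alpha p q : R) :
  0 < p -> q <= 1 -> (forall T, search_tree e T -> local_deficit_bound alpha p q T) ->
  cent e w alpha <= p^-1 * OPT e w - q / p * wset w [set: V].
Proof.
move=> p_gt0 q_le1 bound; set m := wset w [set: V].
have m_le_cost T : search_tree e T -> m <= cost w T.
  case: T => r ts HT; rewrite (cost_induced_cost w e_sym HT) induced_cost_Node inE setTI.
  by rewrite (vset_stree e_sym HT) lerDl sumr_ge0_In // => c _; apply: induced_cost_ge0.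
have connT : connected_set e [set: V].
  case: e_tree => _ _ _ conn _ x y _ _; rewrite (eq_connect (e' := e)) ?conn //.
  by move=> u v; rewrite /restr /= !inE.
have cent_OPT C : search_tree e C -> is_cent_tree e w alpha C -> p * cost w C + q * m <= OPT e w.
  move=> HC Hcent; apply: OPT_ge => T HT; rewrite !(cost_induced_cost w e_sym) //.
  exact: centroid_tree_cost_le (bound T HT) HC Hcent connT.
have m_OPT : m <= OPT e w by apply: OPT_ge.
have m_ge0 : 0 <= m by apply: wset_ge0.
have -> : p^-1 * OPT e w - q / p * m = p^-1 * (OPT e w - q * m).
  by rewrite mulrBr mulrA [p^-1 * q]mulrC.
apply: cent_le => [|C HC Hcent].
  have qm_le_m : q * m <= m by rewrite -[leRHS]mul1r ler_wpM2r.
  by apply: mulr_ge0; [rewrite invr_ge0 ltW | lra].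
by rewrite ler_pdivlMl //; have := cent_OPT C HC Hcent; lra.
Qed.

End CentroidTrees.

Theorem theorem7 (V : finType) (e : rel V) (R : realType) (w : V -> R)
    (Htree : is_tree e) (Hw : forall x, 0 <= w x) :
  let m := wset w [set: V] in
  (forall alpha : R, 0 < alpha < 1 ->
     cent e w alpha <= (1 - alpha)^-1 * OPT e w - alpha / (1 - alpha) * m) /\
  (forall alpha : R, 3^-1 <= alpha <= 2^-1 ->
     cent e w alpha <= (2 - 3 * alpha)^-1 * OPT e w
                       - (3 * alpha - 1) / (2 - 3 * alpha) * m).
Proof.
move=> m; split=> alpha alpha_range; have /andP[? ?] := alpha_range.
  by apply: cent_le_OPT => // [||T HT]; [lra | lra | exact: local_deficit_bound1].
by apply: cent_le_OPT => // [||T HT]; [lra | lra | exact: local_deficit_bound2].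
Qed.
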